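(* Let $k\ge1$ and $b\ge 1$ be integers and $0\le t<k$. Then $$\sigma_{k}^{(b)}(t;1)=\frac{1}{k}\sigma_{k}^{(b)}(t;k)=\frac{1}{k}c_{k}(t).$$
   Context: For a positive integer $m$, $(q)_m=(1-q)\cdots(1-q^m)$, $(q)_0=1$. For integers $b\ge 0$, $k\ge1$ and $1\le s\le k$, let $R^{(b)}_{k,s}(q)=\sum_{t=0}^{k-1}\sigma^{(b)}_k(t;s)q^t$ be the remainder of $\frac{1}{k^b}(q)_{k-1}^{\,b}(q)_{s-1}$ upon division by $1-q^k$. $c_k(t)=\sum_{1\le h\le k,\ \gcd(h,k)=1}e^{2\pi i ht/k}$ is the Ramanujan sum. *)

From mathcomp Require Import all_boot all_order all_algebra all_field.
Set Implicit Arguments. Unset Strict Implicit. Unset Printing Implicit Defensive.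
Import Order.TTheory GRing.Theory Num.Theory.
Local Open Scope ring_scope.

Definition qpoch (m : nat) : {poly algC} := \prod_(1 <= i < m.+1) (1 - 'X^i).

(* sigma^{(b)}_k(t;s): coefficient of q^t in the remainder of
   (1/k^b) (q)_{k-1}^b (q)_{s-1} upon division by 1 - q^k *)
Definition sigma (b k t s : nat) : algC :=
  ((((k ^ b)%:R)^-1 *: (qpoch k.-1 ^+ b * qpoch s.-1)) %% (1 - 'X^k))`_t.

(* e^{2 pi i / k}: k.-root(-1) is e^{i pi / k} (root with minimal nonnegative argument) *)
Definition zeta (k : nat) : algC := (k.-root (-1)) ^+ 2.

Definition ramanujan_sum (k t : nat) : algC :=
  \sum_(1 <= h < k.+1 | coprime h k) zeta k ^+ (h * t).

From mathcomp Require Import all_boot all_order all_algebra all_field.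
From mathcomp Require Import lra zify.
Import Order.TTheory GRing.Theory Num.Theory.
Local Open Scope ring_scope.

(* Evaluated at a k-th root of unity w^j, (q)_{k-1} becomes
   \prod_(1 <= i < k) (1 - w^(j i)), which is k when gcd(j, k) = 1 (both sides
   of X^k - 1 = (X - 1) \prod_(1 <= i < k) (X - w^i) divided by X - 1 and
   evaluated at 1) and 0 otherwise (a factor vanishes).  By orthogonality of the
   powers of w, the polynomial \sum_t c_k(t) q^t takes exactly the same values
   at the k-th roots of unity.  A remainder modulo 1 - q^k is determined by its
   values there, so (q)_{k-1}^e = k^(e-1) \sum_t c_k(t) q^t modulo 1 - q^k for
   every e > 0, and both identities are read off the coefficients.
   The primitivity of zeta k = (k.-root (-1))^2 needs a little geometry:
   y = n.-root (-1) has the largest real part among the roots of X^n + 1 in the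
   closed upper half-plane, so multiplying by conj y moves any 2n-th root of
   unity of the upper half-plane other than 1 towards 1; hence all of them, and
   so all 2n-th roots of unity, are powers of y. *)

(* (a, b) and (c, s) are points p, q of the upper unit half-circle and
   (a c + b s, b c - a s) is p * conj q. *)
Lemma upper_arc_rotate_real (R : realFieldType) (a b c s : R) :
  a ^+ 2 + b ^+ 2 = 1 -> c ^+ 2 + s ^+ 2 = 1 -> 0 <= b -> 0 <= s ->
  a <= c -> c != 1 -> 0 <= b * c - a * s /\ a < a * c + b * s.
Proof.
move=> ab1 cs1 b0 s0 ac c1.
have c_lt1 : c < 1 by rewrite lt_neqAle c1 /=; nra.
have le_sqr x y : 0 <= x -> 0 <= y -> x ^+ 2 <= y ^+ 2 -> x <= y.
  by move=> x0 y0; rewrite ler_sqr ?nnegrE.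
have [a0|a0] := lerP 0 a.
  have sb : s <= b by apply: le_sqr => //; nra.
  have s_gt0 : 0 < s by nra.
  split; nra.
split; last by nra.
have [c0|c0] := lerP 0 c; first by nra.
have bs : b <= s by apply: le_sqr => //; nra.
nra.
Qed.

Lemma upper_arc_rotate {p q : algC} :
  `|p| = 1 -> `|q| = 1 -> 0 <= 'Im p -> 0 <= 'Im q -> 'Re p <= 'Re q -> q != 1 ->
  0 <= 'Im (p * q^*) /\ 'Re p < 'Re (p * q^*).
Proof.
move=> np nq Ip Iq Rpq q1.
rewrite ImM ReM Re_conj Im_conj !mulrN opprK.
pose a := in_algR (Creal_Re p); pose b := in_algR (Creal_Im p).
pose c := in_algR (Creal_Re q); pose s := in_algR (Creal_Im q).
have unit_circle x : `|x| = 1 ->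
    in_algR (Creal_Re x) ^+ 2 + in_algR (Creal_Im x) ^+ 2 = 1.
  by move=> nx; apply: val_inj; rewrite /= -normC2_Re_Im nx expr1n.
have c1 : c != 1.
  apply: contra q1 => /eqP/(congr1 val) /= Rq1.
  have : 'Im q ^+ 2 = 0.
    by apply: (addrI ('Re q ^+ 2)); rewrite -normC2_Re_Im nq Rq1 !expr1n addr0.
  move/eqP; rewrite sqrf_eq0 => /eqP Iq0.
  by rewrite [q]Crect Rq1 Iq0 mulr0 addr0.
have leE (x y : algR) : (x <= y) = (val x <= val y) by [].
have ltE (x y : algR) : (x < y) = (val x < val y) by [].
have [] := @upper_arc_rotate_real _ a b c s
  (unit_circle p np) (unit_circle q nq) Ip Iq Rpq c1.
rewrite leE ltE !rmorphB !rmorphD !rmorphM /= addrC [_ * 'Im p]mulrC.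
by split.
Qed.

Lemma norm_unity_root {m} {v : algC} : (0 < m)%N -> v ^+ m = 1 -> `|v| = 1.
Proof.
by move=> m_gt0 vm1; apply/eqP; rewrite -(pexpr_eq1 m_gt0) // -normrX vm1 normr1.
Qed.

Lemma Im_ge0_or_conj (v : algC) : 0 <= 'Im v \/ 0 <= 'Im v^*.
Proof.
rewrite Im_conj oppr_ge0.
by have [|/ltW] := real_leP (Creal_Im v) (real0 _); [right | left].
Qed.

Section PrincipalRootOfMinusOne.

Context {n : nat} (n_gt0 : (0 < n)%N).
Let y := n.-root (-1 : algC).

Let yn : y ^+ n = -1. Proof. exact: rootCK. Qed.
Let y2n : y ^+ n.*2 = 1. Proof. by rewrite -addnn exprD yn mulrNN mulr1. Qed.
Let n2_gt0 : (0 < n.*2)%N. Proof. by rewrite double_gt0. Qed.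
Let norm_y : `|y| = 1. Proof. exact: norm_unity_root n2_gt0 y2n. Qed.
Let y_neq1 : y != 1.
Proof.
apply/eqP => y1; move/eqP: yn; rewrite y1 expr1n -addr_eq0.
by rewrite -(natrD _ 1 1) pnatr_eq0.
Qed.

Let Im_y_ge0 : 0 <= 'Im y.
Proof.
case: n n_gt0 @y => // -[_ | m _] /=; last exact: Im_rootC_ge0.
by rewrite root1C (Creal_ImP _ _) ?rpredN1.
Qed.

Let Re_le_y v : v ^+ n = -1 -> 'Re v <= 'Re y.
Proof.
move=> vn; have [Iv|Iv] := Im_ge0_or_conj v; first exact: rootC_Re_max.
by rewrite -Re_conj; apply: rootC_Re_max; rewrite // -rmorphXn vn rmorphN1.
Qed.

(* Otherwise v^n = -1 contradicts the maximality of Re y, or v^n = 1 and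
   y * conj v is a root of X^n + 1 with a larger real part than y. *)
Let unity_root_Re_le v : v ^+ n.*2 = 1 -> 0 <= 'Im v -> v != 1 -> 'Re v <= 'Re y.
Proof.
move=> v2n Iv v1; rewrite real_leNgt ?Creal_Re //; apply/negP => lt_yv.
have [_ lt_y_yv] :=
  upper_arc_rotate norm_y (norm_unity_root n2_gt0 v2n) Im_y_ge0 Iv (ltW lt_yv) v1.
have : (v ^+ n) ^+ 2 == 1 by rewrite -exprM muln2 v2n.
rewrite sqrf_eq1 => /orP[/eqP vn1 | /eqP vnN1].
  have : (y * v^*) ^+ n = -1 by rewrite exprMn yn -rmorphXn vn1 rmorph1 mulr1.
  by move/Re_le_y/(lt_le_trans lt_y_yv); rewrite ltxx.
by have := lt_le_trans lt_yv (Re_le_y _ vnN1); rewrite ltxx.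
Qed.

Let upper_unity_root_expr v : v ^+ n.*2 = 1 -> 0 <= 'Im v -> exists i, v = y ^+ i.
Proof.
(* Descent on the number of 2n-th roots of unity to the right of v. *)
have [z z_prim] := C_prim_root_exists n2_gt0.
pose above v := [set i : 'I_n.*2 | 'Re v < 'Re (z ^+ i)].
have [m] := ubnP #|above v|; elim: m v => // m IHm v.
rewrite ltnS => le_m v2n Iv.
have [->|v1] := eqVneq v 1; first by exists 0%N.
have nv := norm_unity_root n2_gt0 v2n.
have [Iv' lt_v_v'] :=
  upper_arc_rotate nv norm_y Iv Im_y_ge0 (unity_root_Re_le _ v2n Iv v1) y_neq1.
have v'2n : (v * y^*) ^+ n.*2 = 1 by rewrite exprMn -rmorphXn y2n rmorph1 mulr1.
have lt_above : (#|above (v * y^*)%R| < #|above v|)%N.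
  apply: proper_card; apply/properP; split.
    by apply/subsetP => i; rewrite !inE; apply: lt_trans.
  have [i v'_zi] := prim_rootP z_prim v'2n.
  by exists i; rewrite !inE -v'_zi ?ltxx.
have [i v'_yi] := IHm _ (leq_trans lt_above le_m) v'2n Iv'.
by exists i.+1; rewrite exprSr -v'_yi -mulrA -normCKC norm_y expr1n mulr1.
Qed.

Let unity_root_expr v : v ^+ n.*2 = 1 -> exists i, v = y ^+ i.
Proof.
move=> v2n; have [Iv|Iv'] := Im_ge0_or_conj v; first exact: upper_unity_root_expr.
have v'2n : v^* ^+ n.*2 = 1 by rewrite -rmorphXn v2n rmorph1.
have [i v'_yi] := upper_unity_root_expr _ v'2n Iv'.
have y'E : y^* = y ^+ (n.*2).-1.
  apply: (mulIf (x := y)); first by rewrite -normr_eq0 norm_y oner_neq0.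
  by rewrite -normCKC norm_y expr1n -exprSr prednK.
by exists ((n.*2).-1 * i)%N; rewrite -[v]conjCK v'_yi rmorphXn /= y'E exprM.
Qed.

Lemma rootCN1_prim : (n.*2).-primitive_root y.
Proof.
have [z z_prim] := C_prim_root_exists n2_gt0.
have [r y_prim r_dvd] := prim_order_exists n2_gt0 y2n.
have [i z_yi] := unity_root_expr _ (prim_expr_order z_prim).
suff dvd_r : (n.*2 %| r)%N.
  by have /eqP <- : r == n.*2 by rewrite eqn_dvd r_dvd dvd_r.
rewrite (prim_order_dvd z_prim) z_yi -exprM mulnC exprM.
by rewrite (prim_expr_order y_prim) expr1n.
Qed.

End PrincipalRootOfMinusOne.

Lemma zeta_prim {k} : (0 < k)%N -> k.-primitive_root (zeta k).
Proof.
move=> k_gt0; have k_dvd : (k %| k.*2)%N by rewrite -muln2 dvdn_mulr.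
by have := dvdn_prim_root (rootCN1_prim k_gt0) k_dvd; rewrite -muln2 mulKn.
Qed.

Lemma coprimeBl j k : (j <= k)%N -> coprime (k - j) k = coprime j k.
Proof.
move=> le_jk; rewrite /coprime -{2}(subnKC le_jk) gcdnDr.
by rewrite -{2}(subnK le_jk) gcdnDr gcdnC.
Qed.

Lemma prod_1subX_prim_root (F : fieldType) k (w : F) :
  k.-primitive_root w -> \prod_(1 <= i < k) (1 - w ^+ i) = k%:R.
Proof.
move=> w_prim; have := factor_Xn_sub_1 w_prim.
rewrite big_ltn ?(prim_order_gt0 w_prim) // expr0 subrX1.
have X1_neq0 : 'X - 1 != 0 :> {poly F} by rewrite -size_poly_eq0 size_XsubC.
have sum1 : \sum_(i < k) ('X^i : {poly F}).[1] = k%:R.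
  by under eq_bigr do rewrite hornerXn expr1n; rewrite sumr_const card_ord.
move=> /(mulfI X1_neq0)/(congr1 (horner^~ 1)).
rewrite horner_prod horner_sum sum1 => <-.
by apply: eq_bigr => i _; rewrite hornerXsubC.
Qed.

Section PrimitiveRootInterpolation.

Context {F : fieldType} {k : nat} {w : F} (w_prim : k.-primitive_root w).

Let k_gt0 : (0 < k)%N := prim_order_gt0 w_prim.

Lemma modp_1subXn_eq (P Q : {poly F}) : (size Q <= k)%N ->
  (forall j, (j < k)%N -> P.[w ^+ j] = Q.[w ^+ j]) -> P %% (1 - 'X^k) = Q.
Proof.
move=> szQ PQ; set d := 1 - 'X^k.
have size_d : size d = k.+1 by rewrite /d -opprB size_opp size_Xn_sub_1.
have d_root j : d.[w ^+ j] = 0.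
  by rewrite !hornerE exprAC (prim_expr_order w_prim) expr1n subrr.
apply/eqP; rewrite -subr_eq0; apply/eqP.
apply: (@roots_geq_poly_eq0 _ _ [seq w ^+ j | j <- iota 0 k]).
- apply/allP => x /mapP[j]; rewrite mem_iota add0n => /andP[_ lt_jk] ->.
  rewrite rootE hornerD hornerN -PQ // {2}(divp_eq P d) hornerD hornerM d_root.
  by rewrite mulr0 add0r subrr.
- rewrite map_inj_in_uniq ?iota_uniq // => i j.
  rewrite !mem_iota !add0n => /andP[_ lt_ik] /andP[_ lt_jk] /eqP.
  by rewrite (eq_prim_root_expr w_prim) !modn_small // => /eqP.
rewrite size_map size_iota (leq_trans (size_add _ _)) // size_opp geq_max szQ andbT.
by rewrite -ltnS -size_d ltn_modp -size_poly_eq0 size_d.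
Qed.

Lemma prod_1subX_unity_root j :
  \prod_(1 <= i < k) (1 - (w ^+ j) ^+ i) = if coprime j k then k%:R else 0.
Proof.
case: ifPn => [co_jk | /negbTE not_co].
  by rewrite prod_1subX_prim_root ?prim_root_exp_coprime.
pose g := gcdn j k; pose i0 := (k %/ g)%N.
have g_gt1 : (1 < g)%N.
  by rewrite ltn_neqAle eq_sym gcdn_gt0 k_gt0 orbT andbT; apply/negbT.
have k_eq : (i0 * g)%N = k by rewrite divnK ?dvdn_gcdr.
have i0_range : (1 <= i0 < k)%N.
  by move: k_gt0; rewrite -k_eq; nia.
have wi0 : (w ^+ j) ^+ i0 = 1.
  apply/eqP; rewrite -exprM -(prim_order_dvd w_prim) -{1}k_eq mulnC.
  by rewrite dvdn_mul ?dvdn_gcdl.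
by rewrite (bigD1_seq i0) ?mem_index_iota ?iota_uniq //= wi0 subrr mul0r.
Qed.

Lemma sum_expr_prim_root e :
  \sum_(t < k) (w ^+ e) ^+ t = if (k %| e)%N then k%:R else 0.
Proof.
case: ifPn => [dvd_ke | not_dvd].
  have -> : w ^+ e = 1 by apply/eqP; rewrite -(prim_order_dvd w_prim).
  by under eq_bigr do rewrite expr1n; rewrite sumr_const card_ord.
have we1 : w ^+ e - 1 != 0 by rewrite subr_eq0 -(prim_order_dvd w_prim).
apply: (mulfI we1); rewrite mulr0 -subrX1 exprAC (prim_expr_order w_prim).
by rewrite expr1n subrr.
Qed.

Lemma ramanujan_dft j : (j < k)%N ->
  \sum_(t < k) (\sum_(1 <= h < k.+1 | coprime h k) w ^+ (h * t)) * (w ^+ j) ^+ t =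
  if coprime j k then k%:R else 0.
Proof.
move=> lt_jk; under eq_bigr do rewrite mulr_suml.
rewrite exchange_big /=.
under eq_bigr => h _ do
  under eq_bigr => t _ do rewrite exprM -exprMn -exprD.
under eq_bigr do rewrite sum_expr_prim_root.
have dvd_hj h : h \in index_iota 1 k.+1 -> (k %| h + j)%N = (h == k - j)%N.
  rewrite mem_index_iota => h_range.
  apply/idP/eqP => [/dvdnP[q hjE] | ->]; last by rewrite subnK ?dvdnn // ltnW.
  by case: q hjE => [|[|q]] /= hjE; lia.
have kj_in : (k - j)%N \in index_iota 1 k.+1 by rewrite mem_index_iota; lia.
rewrite big_mkcond (bigD1_seq (k - j)%N) ?iota_uniq //=.
rewrite dvd_hj // eqxx coprimeBl ?(ltnW lt_jk) // big1_seq ?addr0; first by case: ifP.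
move=> h /andP[h_neq h_in]; rewrite dvd_hj // (negbTE h_neq).
by case: ifP.
Qed.

End PrimitiveRootInterpolation.

Definition ramanujan_poly (k : nat) : {poly algC} :=
  \poly_(t < k) ramanujan_sum k t.

Lemma qpoch0 : qpoch 0 = 1.
Proof. by rewrite /qpoch big_geq. Qed.

Lemma horner_qpoch {k} {w : algC} : k.-primitive_root w ->
  forall j, (qpoch k.-1).[w ^+ j] = if coprime j k then k%:R else 0.
Proof.
move=> w_prim j; rewrite /qpoch prednK ?(prim_order_gt0 w_prim) // horner_prod.
rewrite -(prod_1subX_unity_root w_prim j); apply: eq_bigr => i _.
by rewrite !hornerE.
Qed.

Lemma horner_ramanujan_poly k j : (j < k)%N ->
  (ramanujan_poly k).[zeta k ^+ j] = if coprime j k then k%:R else 0.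
Proof.
move=> lt_jk; have k_gt0 : (0 < k)%N := leq_ltn_trans (leq0n j) lt_jk.
by rewrite horner_poly (ramanujan_dft (zeta_prim k_gt0)).
Qed.

Lemma modp_qpoch_expr k e : (0 < k)%N -> (0 < e)%N ->
  qpoch k.-1 ^+ e %% (1 - 'X^k) = k%:R ^+ e.-1 *: ramanujan_poly k.
Proof.
move=> k_gt0 e_gt0; apply: (modp_1subXn_eq (zeta_prim k_gt0)).
  exact: leq_trans (size_scale_leq _ _) (size_poly _ _).
move=> j lt_jk.
rewrite horner_exp hornerZ horner_ramanujan_poly //.
rewrite (horner_qpoch (zeta_prim k_gt0)).
case: ifP => _; first by rewrite -exprSr prednK.
by rewrite expr0n gtn_eqF ?mulr0.
Qed.

Lemma sigma_1 b k t : (0 < k)%N -> (0 < b)%N -> (t < k)%N ->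
  sigma b k t 1 = (k%:R)^-1 * ramanujan_sum k t.
Proof.
move=> k_gt0 b_gt0 lt_tk.
rewrite /sigma qpoch0 mulr1 modpZl modp_qpoch_expr //.
rewrite !coefZ coef_poly lt_tk.
have k_neq0 : k%:R != 0 :> algC by rewrite pnatr_eq0 -lt0n.
by rewrite natrX -{1}(prednK b_gt0) exprS invfM -mulrA mulKf ?expf_neq0.
Qed.

Lemma sigma_k b k t : (0 < k)%N -> (t < k)%N -> sigma b k t k = ramanujan_sum k t.
Proof.
move=> k_gt0 lt_tk.
rewrite /sigma -exprSr modpZl modp_qpoch_expr // !coefZ coef_poly lt_tk /=.
have k_neq0 : k%:R != 0 :> algC by rewrite pnatr_eq0 -lt0n.
by rewrite natrX mulrA mulVf ?mul1r ?expf_neq0.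
Qed.

Theorem corollary2p6 (k b t : nat) :
  (1 <= k)%N -> (1 <= b)%N -> (t < k)%N ->
  sigma b k t 1 = (k%:R)^-1 * sigma b k t k /\
  (k%:R)^-1 * sigma b k t k = (k%:R)^-1 * ramanujan_sum k t.
Proof.
by move=> k_gt0 b_gt0 lt_tk; rewrite sigma_1 ?sigma_k.
Qed.
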